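(* If $\boldsymbol\mu$ is an invariant probability measure of the Markov transition semigroup $[\Pi_t,t\ge0]$, then $\boldsymbol\mu(\{0\}\times\mathbb R)=0$.
   Context: Fix $\delta\in\mathbb R$, $\gamma>0$, $D>0$. $[\Pi_t,t\ge0]$ is the Markov transition semigroup on $\mathbb R^2$ of the unique global strong solution of (N): $d\xi=-\xi^4\eta\,dt$, $d\eta=(\delta\xi+2\xi^3\eta^2-\gamma\xi^4\eta)dt+\sqrt{2D}\,dW$, with $W$ a standard Wiener process. *)

From HB Require Import structures.
From mathcomp Require Import all_boot all_order all_algebra.
From mathcomp Require Import all_classical all_reals all_analysis.
Set Implicit Arguments. Unset Strict Implicit. Unset Printing Implicit Defensive.
Import Order.TTheory GRing.Theory Num.Theory.
Import numFieldNormedType.Exports.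
Local Open Scope classical_set_scope.
Local Open Scope ring_scope.

Definition is_wiener {R : realType} {d : measure_display} {Omega : measurableType d}
  (P : probability Omega R) (W : R -> Omega -> R) : Prop :=
  [/\ (forall w, W 0 w = 0),
      (forall w, {within `[0, +oo[, continuous (fun t => W t w)}),
      (forall t, measurable_fun setT (W t)),
      (forall s t, 0 <= s -> s < t -> forall B : set R, measurable B ->
         P [set w | W t w - W s w \in B] = normal_prob 0 (Num.sqrt (t - s)) B) &
      (forall (n : nat) (ts : nat -> R), 0 <= ts 0%N ->
         (forall i, (i < n)%N -> ts i < ts i.+1) ->
         forall B : nat -> set R, (forall i, measurable (B i)) ->
         P (\bigcap_(i < n) [set w | W (ts i.+1) w - W (ts i) w \in B i])
         = (\prod_(i < n) P [set w | (W (ts i.+1) w - W (ts i) w)%R \in B i])%E)].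

(* X is a (global, continuous) strong solution family of the SDE (N)
   d xi = - xi^4 eta dt,
   d eta = (delta xi + 2 xi^3 eta^2 - gamma xi^4 eta) dt + sqrt(2D) dW,
   started at every z = (x, y) : X z t w is the state at time t >= 0 on
   sample w. *)
Definition is_solution_N {R : realType} {d : measure_display} {Omega : measurableType d}
  (delta gamma D : R) (P : probability Omega R) (W : R -> Omega -> R)
  (X : R * R -> R -> Omega -> R * R) : Prop :=
  forall z : R * R, \forall w \ae P,
    {within `[0, +oo[, continuous (fun t => X z t w)} /\
    forall t, 0 <= t ->
      (X z t w).1 = z.1 - Rintegral lebesgue_measure `[0, t]
                      (fun s => (X z s w).1 ^+ 4 * (X z s w).2) /\
      (X z t w).2 = z.2 + Rintegral lebesgue_measure `[0, t]
                      (fun s => delta * (X z s w).1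
                                + 2 * (X z s w).1 ^+ 3 * (X z s w).2 ^+ 2
                                - gamma * (X z s w).1 ^+ 4 * (X z s w).2)
                    + Num.sqrt (2 * D) * W t w.

Definition transition {R : realType} {d : measure_display} {Omega : measurableType d}
  (P : probability Omega R) (X : R * R -> R -> Omega -> R * R)
  (t : R) (z : R * R) (A : set (R * R)) : \bar R :=
  P [set w | X z t w \in A].

Definition invariant_measure {R : realType} {d : measure_display} {Omega : measurableType d}
  (P : probability Omega R) (X : R * R -> R -> Omega -> R * R)
  (mu : probability (R * R)%type R) : Prop :=
  forall t, 0 <= t -> forall A : set (R * R), measurable A ->
    (\int[mu]_z transition P X t z A)%E = mu A.

(* The first component of (N) solves the linear equation xi' = - (xi^3 eta) xi, so
   xi_t = xi_0 exp (- int_0^t xi^3 eta): the axis {xi = 0} is invariant and no path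
   reaches it from outside.  On the axis eta_t = eta_0 + sqrt (2D) W_t, so at time t the
   process lies in the segment {0} x [-K, K] with probability at most
   2K / (sqrt (2D) sqrt (2 pi t)), uniformly in the starting point.  Invariance makes
   mu ({0} x [-K, K]) the mu-average of these probabilities, hence 0 (let t -> oo), and
   the axis is the countable union of such segments. *)
From HB Require Import structures.
From mathcomp Require Import all_boot all_order all_algebra.
From mathcomp Require Import all_classical all_reals all_analysis.
From mathcomp Require Import measurable_realfun ring lra.
Import Order.TTheory GRing.Theory Num.Theory.
Import numFieldNormedType.Exports.

Set Implicit Arguments.
Unset Strict Implicit.
Unset Printing Implicit Defensive.
Local Open Scope classical_set_scope.
Local Open Scope ring_scope.

Section linear_integral_equation.
Context {R : realType}.
Notation mu := (@lebesgue_measure R).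
Implicit Types (f g x : R -> R) (t : R).

Lemma continuous_itv0y_integrable f : {within `[0, +oo[, continuous f} ->
  forall u, mu.-integrable `[0, u] (EFin \o f).
Proof.
move=> cf u; apply: continuous_compact_integrable; first exact: segment_compact.
by apply: continuous_subspaceW cf => s /=; rewrite !in_itv /= => /andP[-> _].
Qed.

Lemma is_derive_Rintegral_itv0 f t : {within `[0, +oo[, continuous f} -> 0 < t ->
  is_derive t 1 (fun u => \int[mu]_(s in `[0, u]) f s) (f t).
Proof.
move=> cf t0.
have cft : {for t, continuous f}.
  by have [+ _] := (continuous_within_itvcyP 0 f).1 cf; apply; rewrite in_itv /= t0.
have tt1 : t < t + 1 by rewrite ltrDl.
have [dF <-] := continuous_FTC1_closed tt1 (continuous_itv0y_integrable cf _) t0 cft.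
by rewrite derive1E; exact: derivableP.
Qed.

Lemma linear_integral_eq_expR x g (x0 : R) :
  {within `[0, +oo[, continuous x} -> {within `[0, +oo[, continuous g} ->
  (forall t, 0 <= t -> x t = x0 - \int[mu]_(s in `[0, t]) (x s * g s)) ->
  forall t, 0 <= t -> x t * expR (\int[mu]_(s in `[0, t]) g s) = x0.
Proof.
move=> cx cg hx T; rewrite le_eqVlt => /predU1P[<-|T0].
  by rewrite set_itv1 Rintegral_set1 expR0 mulr1 hx // set_itv1 Rintegral_set1 subr0.
have cxg : {within `[0, +oo[, continuous (x \* g)}.
  by move=> s; apply: continuousM; [exact: cx|exact: cg].
pose F t := \int[mu]_(s in `[0, t]) (x \* g) s.
pose G t := \int[mu]_(s in `[0, t]) g s.
pose h : R -> R := (cst x0 - F) * (expR \o G).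
have hE t : h t = (x0 - F t) * expR (G t) by [].
have h0 : h 0 = x0 by rewrite hE /F /G !set_itv1 !Rintegral_set1 expR0 mulr1 subr0.
have -> : x T * expR (G T) = h T by rewrite hE /F -hx // ltW.
(* [x0 - F] is [x] itself, so the derivative [- x g e^G + x e^G g] of [h] vanishes. *)
have h' : forall t, t \in `]0, T[ -> is_derive t 1 h 0.
  move=> t; rewrite in_itv /= => /andP[t0 _].
  have iF := is_derive_Rintegral_itv0 cxg t0.
  have iE : is_derive t 1 (expR \o G) (expR (G t) * g t).
    exact: is_derive1_comp (is_derive_Rintegral_itv0 cg t0).
  have iH : is_derive t 1 (cst x0 - F) (- (x \* g) t).
    by have := is_deriveB (is_derive_cst x0 t 1) iF; rewrite sub0r.
  apply: (is_derive_eq (is_deriveM iH iE)).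
  have -> : (cst x0 - F) t = x t by rewrite (hx t (ltW t0)).
  by rewrite /= /GRing.scale /=; ring.
have hc : {within `[0, T], continuous h}.
  have cF := parameterized_integral_continuous (ltW T0) (continuous_itv0y_integrable cxg T).
  have cG := parameterized_integral_continuous (ltW T0) (continuous_itv0y_integrable cg T).
  move=> s; apply: continuousM; first by apply: continuousB; [exact: cst_continuous|exact: cF].
  by apply: continuous_comp; [exact: cG|exact: continuous_expR].
have [c _] := MVT_segment (ltW T0) h' hc.
by rewrite mul0r => /eqP; rewrite subr_eq0 => /eqP ->.
Qed.

Lemma linear_integral_eq0 x g (x0 : R) :
  {within `[0, +oo[, continuous x} -> {within `[0, +oo[, continuous g} ->
  (forall t, 0 <= t -> x t = x0 - \int[mu]_(s in `[0, t]) (x s * g s)) ->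
  forall t, 0 <= t -> x t = 0 <-> x0 = 0.
Proof.
move=> cx cg hx t t0; rewrite -(linear_integral_eq_expR cx cg hx t0).
split=> [->|/eqP]; first by rewrite mul0r.
by rewrite mulf_eq0 (gt_eqF (expR_gt0 _)) orbF => /eqP.
Qed.

Lemma path_fst_eq0 (p : R -> R * R) (x0 : R) : {within `[0, +oo[, continuous p} ->
  (forall t, 0 <= t ->
    (p t).1 = x0 - \int[mu]_(s in `[0, t]) ((p s).1 ^+ 4 * (p s).2)) ->
  forall t, 0 <= t -> (p t).1 = 0 <-> x0 = 0.
Proof.
move=> cp hp.
have cx : {within `[0, +oo[, continuous (fun t => (p t).1)}.
  by move=> s; apply: continuous_comp; [exact: cp|exact: cvg_fst].
have cy : {within `[0, +oo[, continuous (fun t => (p t).2)}.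
  by move=> s; apply: continuous_comp; [exact: cp|exact: cvg_snd].
have cg : {within `[0, +oo[, continuous (fun s => (p s).1 ^+ 3 * (p s).2)}.
  have cx3 : {within `[0, +oo[, continuous (fun s => (p s).1 ^+ 3)}.
    by move=> s; exact: continuous_comp (cx s) (@exprn_continuous R 3 _).
  by move=> s; exact: continuousM (cx3 s) (cy s).
apply: (linear_integral_eq0 cx cg) => t t0; rewrite hp //; congr (_ - _).
by apply: eq_Rintegral => s _; rewrite mulrA -exprS.
Qed.

End linear_integral_equation.

Lemma le_measure_ae d (T : measurableType d) (R : realType)
    (m : {measure set T -> \bar R}) (A B : set T) :
  measurable A -> measurable B -> {ae m, forall w, A w -> B w} -> (m A <= m B)%E.
Proof.
move=> mA mB [N [mN N0 sAB]].
have ANB : A `<=` N `|` B.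
  move=> w Aw; case: (pselect (N w)) => [|nN]; [by left|right].
  by apply: contrapT => nB; apply/nN/(sAB w) => /(_ Aw).
apply: (le_trans (le_measure _ _ _ ANB)); rewrite ?inE //; first exact: measurableU.
by apply: (le_trans (measureU2 _ _ _)) => //; rewrite [X in (X + _)%E]N0 add0e.
Qed.

Lemma normal_prob_itv_le (R : realType) (s a b : R) : s != 0 -> a <= b ->
  (normal_prob 0 s `[a, b] <= (normal_peak s * (b - a))%:E)%E.
Proof.
move=> s0 ab; rewrite /normal_prob.
apply: (@le_trans _ _ (\int[lebesgue_measure]_(x in `[a, b]) (normal_peak s)%:E)%E).
  apply: ge0_le_integral => //.
  - by move=> x _; rewrite lee_fin normal_pdf_ge0.
  - apply/measurable_EFinP; apply: measurable_funTS.
    exact: measurable_normal_pdf.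
  - by move=> x _; rewrite lee_fin normal_pdf_ub.
rewrite integral_cst //.
set m := (X in (_ * X <= _)%E).
have -> : m = if a < b then (b - a)%:E else 0%E.
  by rewrite -lte_fin; exact: (lebesgue_measure_itv `[a, b]).
case: ltP => [_|ba]; first by rewrite -EFinM.
have -> : b = a by apply/eqP; rewrite eq_le ab ba.
by rewrite subrr mulr0 mule0.
Qed.

Lemma normal_peak_mul_le (R : realType) (s : R) : 0 < s -> normal_peak s * s <= 1.
Proof.
move=> s0; have pi2 := pi_ge2 R.
have sq_gt0 : 0 < Num.sqrt (s ^+ 2 * pi *+ 2).
  by rewrite sqrtr_gt0 mulrn_wgt0 // mulr_gt0 ?exprn_gt0 // (lt_le_trans _ pi2).
rewrite /normal_peak mulrC ler_pdivrMr // mul1r.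
rewrite -[s in s <= _](ger0_norm (ltW s0)) -sqrtr_sqr ler_sqrt; first by rewrite mulr2n; nra.
by rewrite mulrn_wge0 // mulr_ge0 ?sqr_ge0 // (le_trans _ pi2).
Qed.

Definition axis_segment {R : realType} (K : R) : set (R * R) := [set 0] `*` `[- K, K].

Lemma measurable_axis_segment {R : realType} (K : R) : measurable (axis_segment K).
Proof. by apply: measurableX; [exact: measurable_set1|exact: measurable_itv]. Qed.

Section axis_segment_transition.
Variables (R : realType) (delta gamma D : R) (d : measure_display) (Omega : measurableType d).
Variables (P : probability Omega R) (W : R -> Omega -> R) (X : R * R -> R -> Omega -> R * R).
Hypothesis D_gt0 : 0 < D.
Hypothesis W_wiener : is_wiener P W.
Hypothesis X_solution : is_solution_N delta gamma D P W X.
Hypothesis X_measurable : forall t, 0 <= t ->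
  measurable_fun setT (fun zw : (R * R) * Omega => X zw.1 t zw.2).

Let c := Num.sqrt (2 * D).

Let c_gt0 : 0 < c. Proof. by rewrite sqrtr_gt0 mulr_gt0. Qed.

Lemma solution_ae_axis z : {ae P, forall w, forall t, 0 <= t ->
  ((X z t w).1 = 0 <-> z.1 = 0) /\ (z.1 = 0 -> (X z t w).2 = z.2 + c * W t w)}.
Proof.
apply: filterS (X_solution z) => w [cw hw] t t0.
have hx := path_fst_eq0 cw (fun s s0 => (hw s s0).1).
split=> [|z1]; first exact: hx.
rewrite (hw t t0).2 (@eq_Rintegral _ _ _ _ _ (fun=> 0)) ?Rintegral_cst ?mul0r ?addr0 //.
move=> s; rewrite inE /= in_itv /= => /andP[s0 _].
by rewrite ((hx s s0).2 z1); ring.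
Qed.

Lemma measurable_solution_event t z A : 0 <= t -> measurable A ->
  measurable [set w | X z t w \in A].
Proof.
move=> t0 mA; have := measurable_fun_pair2 z (X_measurable t0) measurableT mA.
by rewrite setTI; congr measurable; apply/seteqP; split=> w /=; rewrite inE.
Qed.

Lemma measurable_transition t A : 0 <= t -> measurable A ->
  measurable_fun setT ((transition P X t)^~ A).
Proof.
move=> t0 mA.
pose S := (fun zw : (R * R) * Omega => X zw.1 t zw.2) @^-1` A.
have mS : measurable S by have := X_measurable t0 measurableT mA; rewrite setTI.
have -> : (transition P X t)^~ A = P \o xsection S by [].
exact: measurable_fun_xsection.
Qed.

Lemma transition_axis_segment_le K t z : 0 < K -> 0 < t ->
  (transition P X t z (axis_segment K) <= (normal_peak (Num.sqrt t) * (2 * K / c))%:E)%E.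
Proof.
move=> K0 t0; have [W0 _ W_meas W_gauss _] := W_wiener.
have mE := measurable_solution_event z (ltW t0) (measurable_axis_segment K).
have bound_ge0 : 0 <= normal_peak (Num.sqrt t) * (2 * K / c).
  by rewrite mulr_ge0 ?normal_peak_ge0 // divr_ge0 ?mulr_ge0 ?ltW.
rewrite /transition; have [z1|z1] := eqVneq z.1 0; last first.
  apply: (le_trans (le_measure_ae mE measurable0 _)); last by rewrite measure0 lee_fin.
  apply: filterS (solution_ae_axis z) => w hw; rewrite /= inE => -[x1 _].
  by move/eqP: z1; apply; exact/(hw t (ltW t0)).1.
pose a := (- K - z.2) / c; pose b := (K - z.2) / c.
have ab : a <= b by rewrite ler_pM2r ?invr_gt0 //; lra.
pose E := W t @^-1` `[a, b].
have PE : P E = normal_prob 0 (Num.sqrt t) `[a, b].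
  rewrite -[t in Num.sqrt t]subr0 -W_gauss //; congr (P _).
  by apply/seteqP; split=> w; rewrite /E /= W0 subr0 in_setE.
have mWE : measurable E by rewrite -[E]setTI; exact: W_meas.
apply: (le_trans (le_measure_ae mE mWE _)).
  apply: filterS (solution_ae_axis z) => w hw; rewrite /= inE => -[_].
  rewrite /E /= !in_itv /= ((hw t (ltW t0)).2 z1) => /andP[yl yu].
  by rewrite !ler_pdivrMr // !ler_pdivlMr //; apply/andP; split; lra.
rewrite [X in (X <= _)%E]PE; apply: (le_trans (normal_prob_itv_le _ ab)).
  by rewrite gt_eqF // sqrtr_gt0.
have -> : b - a = 2 * K / c by rewrite /a /b; field; rewrite gt_eqF.
by rewrite lee_fin.
Qed.

Variable mu : probability (R * R)%type R.
Hypothesis mu_invariant : invariant_measure P X mu.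

Lemma invariant_axis_segment0 K : 0 < K -> mu (axis_segment K) = 0%E.
Proof.
move=> K0; apply/eqP; rewrite eq_le measure_ge0 andbT.
apply/lee_addgt0Pr => r r0; rewrite add0e.
pose M := 2 * K / c.
have M0 : 0 < M by rewrite divr_gt0 ?mulr_gt0.
pose t := (M / r) ^+ 2.
have t0 : 0 < t by rewrite exprn_gt0 // divr_gt0.
have sqrt_t : Num.sqrt t = M / r by rewrite sqrtr_sqr ger0_norm // divr_ge0 // ltW.
rewrite -(mu_invariant (ltW t0) (measurable_axis_segment K)).
apply: (@le_trans _ _ (\int[mu]_z (normal_peak (Num.sqrt t) * M)%:E)%E).
  apply: ge0_le_integral => //.
  - exact: measurable_transition (ltW t0) (measurable_axis_segment K).
  - by move=> z _; exact: transition_axis_segment_le.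
rewrite integral_cst // [X in (_ * X)%E]probability_setT mule1 lee_fin sqrt_t.
set p := normal_peak (M / r).
have -> : p * M = r * (p * (M / r)) by field; rewrite gt_eqF.
by rewrite -[leRHS]mulr1 ler_pM2l // normal_peak_mul_le // divr_gt0.
Qed.

End axis_segment_transition.

Theorem lemma3 (R : realType) (delta gamma D : R) (hgamma : 0 < gamma) (hD : 0 < D)
  (d : measure_display) (Omega : measurableType d) (P : probability Omega R)
  (W : R -> Omega -> R) (X : R * R -> R -> Omega -> R * R)
  (hW : is_wiener P W)
  (hX : is_solution_N delta gamma D P W X)
  (hXmeas : forall t, 0 <= t ->
     measurable_fun setT (fun zw : (R * R) * Omega => X zw.1 t zw.2))
  (mu : probability (R * R)%type R)
  (hmu : invariant_measure P X mu) :
  mu [set z | z.1 = 0] = 0%E.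
Proof.
have axis_cover : [set z : R * R | z.1 = 0] `<=` \bigcup_n axis_segment n.+1%:R.
  move=> z /= z1; exists (Num.trunc `|z.2|) => //; split=> //=.
  by rewrite in_itv /= -ler_norml ltW // truncnS_gt.
have measurable_axis : measurable [set z : R * R | z.1 = 0].
  have -> : [set z : R * R | z.1 = 0] = [set 0] `*` setT.
    by apply/seteqP; split=> z /= => [->|[]].
  exact: measurableX (measurable_set1 _) measurableT.
apply/eqP; rewrite eq_le measure_ge0 andbT.
have := measure_sigma_subadditive mu (fun n => measurable_axis_segment n.+1%:R) measurable_axis.
rewrite /subset_sigma_subadditive eseries0 => [/(_ axis_cover)//|n _ _].
by apply: (invariant_axis_segment0 hD hW hX hXmeas hmu).
Qed.
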